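(* For every contractor network and every node $i\in\mathcal V$, the limit $m_i:=\lim_{t\to\infty}m_i^t$ exists, and the vector $\mathbf m=(m_i)_i$ satisfies the fixed-point equation $$m_i=(1-\alpha_i)r_i+\alpha_i\sum_{j\in\delta_{\mathrm{in}}(i)}w_{ij}m_j\quad(i\in\mathcal V),\qquad\text{i.e. }\ \mathbf m=(\mathbf I-\mathbf A)\mathbf r+\mathbf A\mathbf W\mathbf m.$$ Moreover $\mathbf I-\mathbf A\mathbf W$ is invertible, so $\mathbf m$ is the unique solution of this equation, and $\mathbf m=(\mathbf I-\mathbf A\mathbf W)^{-1}(\mathbf I-\mathbf A)\mathbf r$.
   Context: A contractor network is a finite directed graph $G=(\mathcal V,\mathcal E)$ with $n=|\mathcal V|$ nodes, without multiple edges (self-loops and directed cycles are allowed), in which every node has at least one incident edge. For $i\in\mathcal V$ let $\delta_{\mathrm{in}}(i)=\{j:(j,i)\in\mathcal E\}$ and $\delta_{\mathrm{out}}(i)=\{k:(i,k)\in\mathcal E\}$. A node $i$ is a pure principal if $\delta_{\mathrm{in}}(i)=\emptyset$, a pure obligee if $\delta_{\mathrm{out}}(i)=\emptyset$, and an intermediary otherwise. Each edge $(j,i)\in\mathcal E$ carries a weight $w_{ij}>0$; set $w_{ij}=0$ if $(j,i)\notin\mathcal E$; for every node $i$ with $\delta_{\mathrm{in}}(i)\neq\emptyset$ we have $\sum_{j\in\delta_{\mathrm{in}}(i)}w_{ij}=1$. Let $\mathbf W=(w_{ij})_{i,j\in\mathcal V}$. Each node has a risk score $r_i$, with $r_i\in(0,1)$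 if $i$ is not a pure obligee and $r_i=0$ if $i$ is a pure obligee; $\mathbf r=(r_i)_i$. Each node has a propagation parameter $\alpha_i$, with $\alpha_i=0$ for pure principals, $\alpha_i=1$ for pure obligees, and $\alpha_i\in(0,1)$ for intermediaries; $\mathbf A=\mathrm{diag}(\alpha_i)_{i\in\mathcal V}$. The failure process $(\mathbf X^t)_{t\in\mathbb N}$, $\mathbf X^t\in\{0,1\}^n$, is defined by: the $X_i^0$ are independent with $X_i^0\sim\mathrm{Bernoulli}(r_i)$; for each $t\ge0$, conditionally on $(\mathbf X^0,\dots,\mathbf X^t)$, the $X_i^{t+1}$, $i\in\mathcal V$, are independent with $X_i^{t+1}\sim\mathrm{Bernoulli}\big((1-\alpha_i)r_i+\alpha_i\sum_{j\in\delta_{\mathrm{in}}(i)}w_{ij}X_j^t\big)$. Write $m_i^t=\mathbb E[X_i^t]$. *)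

From HB Require Import structures.
From mathcomp Require Import all_boot all_order all_algebra.
From mathcomp Require Import all_classical all_reals all_analysis.
Set Implicit Arguments. Unset Strict Implicit. Unset Printing Implicit Defensive.
Import Order.TTheory GRing.Theory Num.Theory.
Local Open Scope ring_scope.

Section Contractor.
Variables (R : realType) (n : nat).

(* Nodes are 'I_n.  [E j i] means (j,i) is an edge (j -> i).
   w i j is the weight w_{ij} of edge (j,i).  States are {ffun 'I_n -> bool}. *)

Definition has_in (E : rel 'I_n) (i : 'I_n) : bool := [exists j, E j i].
Definition has_out (E : rel 'I_n) (i : 'I_n) : bool := [exists k, E i k].

Definition contractor_network (E : rel 'I_n) (w : 'I_n -> 'I_n -> R)
  (r alpha : 'I_n -> R) : Prop :=
  (forall i, has_in E i || has_out E i) /\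
  (forall i j, E j i -> 0 < w i j) /\
  (forall i j, ~~ E j i -> w i j = 0) /\
  (forall i, has_in E i -> \sum_(j | E j i) w i j = 1) /\
  (forall i, has_out E i -> 0 < r i < 1) /\
  (forall i, ~~ has_out E i -> r i = 0) /\
  (forall i, ~~ has_in E i -> alpha i = 0) /\
  (forall i, ~~ has_out E i -> alpha i = 1) /\
  (forall i, has_in E i -> has_out E i -> 0 < alpha i < 1).

Definition bern (p : R) (b : bool) : R := if b then p else 1 - p.

(* success parameter of X_i^{t+1} given X^t = x *)
Definition trans_param (E : rel 'I_n) (w : 'I_n -> 'I_n -> R) (r alpha : 'I_n -> R)
  (x : {ffun 'I_n -> bool}) (i : 'I_n) : R :=
  (1 - alpha i) * r i + alpha i * \sum_(j | E j i) w i j * (x j)%:R.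

(* law (probability mass function) of X^t on {0,1}^n: X^0 has independent
   Bernoulli(r_i) coordinates; given the past, the X_i^{t+1} are independent
   Bernoulli(trans_param X^t i) (the conditional law only depends on X^t). *)
Fixpoint law (E : rel 'I_n) (w : 'I_n -> 'I_n -> R) (r alpha : 'I_n -> R)
  (t : nat) (x : {ffun 'I_n -> bool}) : R :=
  match t with
  | 0 => \prod_i bern (r i) (x i)
  | t'.+1 => \sum_(y : {ffun 'I_n -> bool})
               law E w r alpha t' y * \prod_i bern (trans_param E w r alpha y i) (x i)
  end.

Definition mean (E : rel 'I_n) (w : 'I_n -> 'I_n -> R) (r alpha : 'I_n -> R)
  (t : nat) (i : 'I_n) : R :=
  \sum_(x : {ffun 'I_n -> bool}) law E w r alpha t x * (x i)%:R.

Definition Wmx (w : 'I_n -> 'I_n -> R) : 'M[R]_n := \matrix_(i, j) w i j.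
Definition Amx (alpha : 'I_n -> R) : 'M[R]_n := diag_mx (\row_i alpha i).
Definition rvec (r : 'I_n -> R) : 'cV[R]_n := \col_i r i.

End Contractor.

From HB Require Import structures.
From mathcomp Require Import all_boot all_order all_algebra.
From mathcomp Require Import all_classical all_reals all_analysis.
Import Order.TTheory GRing.Theory Num.Theory.
Import numFieldNormedType.Exports.
Local Open Scope classical_set_scope.
Local Open Scope ring_scope.

(* Conditioning on X^t gives the affine recursion m^{t+1} = (I - A) r + B m^t
   for the mean vector, with B = A W, so the errors m^t - m to a fixed point m
   satisfy e^{t+1} = B e^t.  B is nonnegative with row sums at most 1, and every
   row sum of B^2 is below 1; hence B^2 contracts the sup norm by some q < 1,
   which makes I - B invertible and gives e^t = O(q^(t/2)). *)

Section ProductBernoulli.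
Context {R : realType} {I : finType}.

Lemma sum_prod_bern (p : I -> R) : \sum_(x : {ffun I -> bool}) \prod_i bern (p i) (x i) = 1.
Proof.
rewrite -(bigA_distr_bigA (fun i b => bern (p i) b)) big1 // => i _.
by rewrite big_bool /= /bern addrC subrK.
Qed.

Lemma mean_prod_bern (p : I -> R) i :
  \sum_(x : {ffun I -> bool}) (\prod_k bern (p k) (x k)) * (x i)%:R = p i.
Proof.
transitivity (\sum_(x : {ffun I -> bool})
   \prod_k (bern (p k) (x k) * (if k == i then (x k)%:R else 1))).
  apply: eq_bigr => x _; rewrite big_split /= -big_mkcond big_pred1_eq //.
rewrite -(bigA_distr_bigA (fun k (b : bool) =>
  bern (p k) b * (if k == i then b%:R else 1))) (bigD1 i) //=.
rewrite [X in _ * X]big1 ?mulr1; first by rewrite big_bool /= eqxx /bern mulr1 mulr0 addr0.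
by move=> k /negbTE ->; rewrite big_bool /= !mulr1 /bern addrC subrK.
Qed.

End ProductBernoulli.

Lemma mulmx_diag_entry (R : comPzRingType) (n : nat) (a : 'I_n -> R) (W : 'M[R]_n)
    (x : 'cV[R]_n) i :
  (diag_mx (\row_k a k) *m W *m x) i ord0 = \sum_j a i * W i j * x j ord0.
Proof.
rewrite -mulmxA mul_diag_mx mxE mxE mxE mulr_sumr.
by apply: eq_bigr => j _; rewrite mulrA.
Qed.

Section MeanDynamics.
Context {R : realType} {n : nat}.
Variables (E : rel 'I_n) (w : 'I_n -> 'I_n -> R) (r alpha : 'I_n -> R).

Lemma sum_law t : \sum_x law E w r alpha t x = 1.
Proof.
elim: t => [|t IH] /=; first exact: sum_prod_bern.
rewrite exchange_big /= -[RHS]IH; apply: eq_bigr => y _.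
by rewrite -mulr_sumr sum_prod_bern mulr1.
Qed.

Lemma meanS_trans_param t i :
  mean E w r alpha t.+1 i = \sum_y law E w r alpha t y * trans_param E w r alpha y i.
Proof.
rewrite /mean /=; under eq_bigr do rewrite mulr_suml.
rewrite exchange_big /=; apply: eq_bigr => y _.
rewrite -(mean_prod_bern (trans_param E w r alpha y) i) mulr_sumr.
by apply: eq_bigr => x _; rewrite mulrA.
Qed.

Lemma meanS t i : mean E w r alpha t.+1 i =
  (1 - alpha i) * r i + alpha i * \sum_(j | E j i) w i j * mean E w r alpha t j.
Proof.
rewrite meanS_trans_param /trans_param.
under eq_bigr do rewrite mulrDr.
rewrite big_split /= -mulr_suml sum_law mul1r; congr (_ + _).
under eq_bigr do rewrite mulrCA.
rewrite -mulr_sumr; congr (_ * _).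
under eq_bigr do rewrite mulr_sumr.
rewrite exchange_big /=; apply: eq_bigr => j _; rewrite mulr_sumr.
by apply: eq_bigr => y _; rewrite mulrCA mulrA.
Qed.

Lemma leak_entry i : ((1%:M - Amx alpha) *m rvec r) i ord0 = (1 - alpha i) * r i.
Proof. by rewrite mulmxBl mul1mx mul_diag_mx !mxE mulrBl mul1r. Qed.

Hypothesis w_off_edge : forall i j, ~~ E j i -> w i j = 0.

Lemma AWmx_entry (x : 'cV[R]_n) i :
  (Amx alpha *m Wmx w *m x) i ord0 = alpha i * \sum_(j | E j i) w i j * x j ord0.
Proof.
rewrite mulmx_diag_entry mulr_sumr [RHS]big_mkcond /=; apply: eq_bigr => j _.
case: ifP => [_|/negbT/w_off_edge]; rewrite !mxE ?mulrA //.
by move=> ->; rewrite mulr0 mul0r.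
Qed.

Definition mean_vec t : 'cV[R]_n := \col_i mean E w r alpha t i.

Lemma mean_vecS t : mean_vec t.+1 =
  (1%:M - Amx alpha) *m rvec r + Amx alpha *m Wmx w *m mean_vec t.
Proof.
apply/matrixP => i j; rewrite ord1 [LHS]mxE meanS [RHS]mxE leak_entry AWmx_entry.
by congr (_ + _ * _); apply: eq_bigr => k _; rewrite mxE.
Qed.

Lemma mean_vec_sub_fixpoint (m : 'cV[R]_n) t :
  m = (1%:M - Amx alpha) *m rvec r + Amx alpha *m Wmx w *m m ->
  mean_vec t - m = iter t (mulmx (Amx alpha *m Wmx w)) (mean_vec 0 - m).
Proof.
move=> m_fix; elim: t => [|t IH] //=.
by rewrite mean_vecS {1}m_fix opprD addrACA subrr add0r -mulmxBr IH.
Qed.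

End MeanDynamics.

Lemma affine_fixpointE {R : comUnitRingType} {n : nat} {B : 'M[R]_n} (c x : 'cV[R]_n) :
  1%:M - B \in unitmx -> x = c + B *m x <-> x = invmx (1%:M - B) *m c.
Proof.
move=> B_unit; split => [x_fix|->].
  have <- : (1%:M - B) *m x = c by rewrite mulmxBl mul1mx {1}x_fix addrK.
  by rewrite mulKmx.
set y := invmx _ *m c; have <- : (1%:M - B) *m y = c by rewrite mulKVmx.
by rewrite mulmxBl mul1mx subrK.
Qed.

Section Contraction.
Context {R : archiRealFieldType} {n : nat} {B : 'M[R]_n}.
Hypothesis B_ge0 : forall i j, 0 <= B i j.
Hypothesis rowsum_le1 : forall i, \sum_j B i j <= 1.
Hypothesis rowsum2_lt1 : forall i, \sum_j B i j * \sum_k B j k < 1.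
Implicit Types x : 'cV[R]_n.

Definition cvnorm (x : 'cV[R]_n) : R := \big[Num.max/0]_i `|x i ord0|.

Lemma cvnorm_ge0 x : 0 <= cvnorm x.
Proof. exact: bigmax_ge_id. Qed.

Lemma le_cvnorm x i : `|x i ord0| <= cvnorm x.
Proof. exact: le_bigmax. Qed.

Let q := \big[Num.max/0]_i \sum_j B i j * \sum_k B j k.

Let q_ge0 : 0 <= q. Proof. exact: bigmax_ge_id. Qed.

Let q_lt1 : q < 1. Proof. by apply: bigmax_lt => // i _; apply: rowsum2_lt1. Qed.

Lemma norm_mulmx_le x i : `|(B *m x) i ord0| <= \sum_j B i j * `|x j ord0|.
Proof.
rewrite mxE; apply: le_trans (ler_norm_sum _ _ _) _.
by apply: ler_sum => j _; rewrite normrM ger0_norm.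
Qed.

Lemma norm_mulmx_le_rowsum x i : `|(B *m x) i ord0| <= cvnorm x * \sum_j B i j.
Proof.
apply: le_trans (norm_mulmx_le x i) _; rewrite mulr_sumr.
by apply: ler_sum => j _; rewrite mulrC ler_wpM2r ?le_cvnorm.
Qed.

Lemma cvnorm_mulmx_le x : cvnorm (B *m x) <= cvnorm x.
Proof.
apply: bigmax_le => [|i _]; first exact: cvnorm_ge0.
by apply: le_trans (norm_mulmx_le_rowsum x i) _; rewrite ler_piMr ?cvnorm_ge0.
Qed.

Lemma cvnorm_mulmx2_le x : cvnorm (B *m (B *m x)) <= q * cvnorm x.
Proof.
apply: bigmax_le => [|i _]; first by rewrite mulr_ge0 ?cvnorm_ge0.
apply: le_trans (norm_mulmx_le _ i) _.
have -> : q * cvnorm x = cvnorm x * q by rewrite mulrC.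
apply: le_trans (ler_wpM2l (cvnorm_ge0 x) (le_bigmax _ _ i)); rewrite mulr_sumr.
apply: ler_sum => j _; rewrite mulrCA ler_wpM2l //.
exact: norm_mulmx_le_rowsum.
Qed.

Lemma fixpoint_mulmx_eq0 x : x = B *m x -> x = 0.
Proof.
move=> x_fix; have x_fix2 : x = B *m (B *m x) by rewrite -!x_fix.
have : cvnorm x * (1 - q) <= 0.
  by rewrite mulrBr mulr1 subr_le0 mulrC {1}x_fix2 cvnorm_mulmx2_le.
rewrite pmulr_lle0 ?subr_gt0 // => x_norm_le0.
apply/matrixP => i j; rewrite ord1 mxE; apply/normr0_eq0/le_anti.
by rewrite normr_ge0 (le_trans (le_cvnorm x i)).
Qed.

Lemma unitmx_1B : 1%:M - B \in unitmx.
Proof.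
rewrite -unitmx_tr unitmxE unitfE; apply/negP => /det0P [v v_neq0].
rewrite -[v in v *m _]trmxK -trmx_mul -trmx0 => /trmx_inj.
rewrite mulmxBl mul1mx => /eqP; rewrite subr_eq0 => /eqP/fixpoint_mulmx_eq0 v0.
by move/negP: v_neq0; apply; rewrite -[v]trmxK v0 trmx0.
Qed.

Lemma cvnorm_iter_mulmx x t :
  cvnorm (iter t (mulmx B) x) <= q ^+ t./2 * cvnorm x.
Proof.
suff : cvnorm (iter t (mulmx B) x) <= q ^+ t./2 * cvnorm x /\
       cvnorm (iter t.+1 (mulmx B) x) <= q ^+ t.+1./2 * cvnorm x by case.
elim: t => [|t [IH IHS]]; first by rewrite /= expr0 !mul1r cvnorm_mulmx_le.
split=> //=; rewrite exprS -mulrA.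
by apply: le_trans (cvnorm_mulmx2_le _) _; rewrite ler_wpM2l.
Qed.

Lemma iter_mulmx_cvg0 x i :
  (fun t => (iter t (mulmx B) x) i ord0) @ \oo --> 0.
Proof.
pose bound t := q ^+ t./2 * cvnorm x.
have bound_cvg0 : bound @ \oo --> 0.
  rewrite -(mul0r (cvnorm x)); apply: cvgMr_tmp.
  have -> : (fun t => q ^+ t./2) = (fun k => q ^+ k) \o divn^~ 2.
    by apply/funext => t; rewrite /= divn2.
  have q_norm_lt1 : `|q| < 1 by rewrite ger0_norm.
  by apply: cvg_comp (cvg_expr q_norm_lt1); exact: cvg_divnr.
apply: (@squeeze_cvgr _ _ _ _ (- bound) bound); last exact: bound_cvg0.
- near=> t; rewrite -ler_norml.
  exact: le_trans (le_cvnorm _ i) (cvnorm_iter_mulmx x t).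
- by rewrite -oppr0; exact: cvgN.
Unshelve. all: end_near.
Qed.

End Contraction.

Section Network.
Context {R : realType} {n : nat} {E : rel 'I_n}
  {w : 'I_n -> 'I_n -> R} {r alpha : 'I_n -> R}.

Lemma AWmxE i j : (Amx alpha *m Wmx w) i j = alpha i * w i j.
Proof. by rewrite mul_diag_mx !mxE. Qed.

Hypothesis net : contractor_network E w r alpha.

Lemma network_w_off_edge i j : ~~ E j i -> w i j = 0.
Proof. by case: net => _ [_ [w0 _]]; apply: w0. Qed.

Lemma network_w_ge0 i j : 0 <= w i j.
Proof.
case: net => _ [w_gt0 _].
by have [/w_gt0/ltW|/network_w_off_edge ->] := boolP (E j i).
Qed.

Lemma network_sum_w i : \sum_j w i j = (has_in E i)%:R.
Proof.
case: net => _ [_ [_ [sum_w1 _]]].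
rewrite (bigID (fun j => E j i)) /= [X in _ + X]big1 ?addr0; last first.
  by move=> j /network_w_off_edge.
have [/sum_w1 //|no_in] := boolP (has_in E i).
by apply: big1 => j Eji; case/negP: no_in; apply/existsP; exists j.
Qed.

Lemma network_alpha_ge0 i : 0 <= alpha i.
Proof.
case: net => edge [_ [_ [_ [_ [_ [a0 [a1 a01]]]]]]].
case hi: (has_in E i); case ho: (has_out E i).
- by case/andP: (a01 i hi ho) => /ltW.
- by rewrite a1 ?ho.
- by rewrite a0 ?hi.
- by move: (edge i); rewrite hi ho.
Qed.

Lemma AW_ge0 i j : 0 <= (Amx alpha *m Wmx w) i j.
Proof. by rewrite AWmxE mulr_ge0 ?network_alpha_ge0 ?network_w_ge0. Qed.

Lemma AW_rowsumE i : \sum_j (Amx alpha *m Wmx w) i j = alpha i * (has_in E i)%:R.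
Proof. by under eq_bigr do rewrite AWmxE; rewrite -mulr_sumr network_sum_w. Qed.

Lemma AW_rowsum_lt1 i : has_out E i -> \sum_j (Amx alpha *m Wmx w) i j < 1.
Proof.
case: net => _ [_ [_ [_ [_ [_ [a0 [_ a01]]]]]]] ho; rewrite AW_rowsumE.
have [hi|/a0 ->] := boolP (has_in E i); last by rewrite mul0r.
by rewrite mulr1; case/andP: (a01 i hi ho).
Qed.

Lemma AW_rowsum_le1 i : \sum_j (Amx alpha *m Wmx w) i j <= 1.
Proof.
have [/AW_rowsum_lt1/ltW //|no_out] := boolP (has_out E i).
case: net => _ [_ [_ [_ [_ [_ [_ [a1 _]]]]]]].
by rewrite AW_rowsumE a1 // mul1r lern1 leq_b1.
Qed.

(* A pure obligee has row sum 1, but each of its in-neighbours has an out-edge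
   and thus row sum < 1, so two steps always leak. *)
Lemma AW_rowsum2_lt1 i :
  \sum_j (Amx alpha *m Wmx w) i j * \sum_k (Amx alpha *m Wmx w) j k < 1.
Proof.
pose rho j := \sum_k (Amx alpha *m Wmx w) j k.
have le_rowsum : \sum_j (Amx alpha *m Wmx w) i j * rho j <= rho i.
  by apply: ler_sum => j _; rewrite ler_piMr ?AW_ge0 ?AW_rowsum_le1.
have [/AW_rowsum_lt1|no_out] := boolP (has_out E i); first exact: le_lt_trans le_rowsum.
case: net => edge [w_gt0 [_ [_ [_ [_ [_ [a1 _]]]]]]].
have in_i : has_in E i by move: (edge i); rewrite (negbTE no_out) orbF.
have /existsP [j0 Ej0i] := in_i.
have out_j0 : has_out E j0 by apply/existsP; exists i.
have sum_w1 : \sum_j w i j = 1 by rewrite network_sum_w in_i.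
have gap : 0 < \sum_j w i j * (1 - rho j).
  rewrite (bigD1 j0) //= ltr_pwDl ?mulr_gt0 ?w_gt0 ?subr_gt0 ?AW_rowsum_lt1 //.
  by apply: sumr_ge0 => j _; rewrite mulr_ge0 ?network_w_ge0 ?subr_ge0 ?AW_rowsum_le1.
under eq_bigr do rewrite AWmxE a1 // mul1r.
have -> : \sum_j w i j * rho j = 1 - \sum_j w i j * (1 - rho j).
  rewrite -{1}sum_w1 -sumrB; apply: eq_bigr => j _.
  by rewrite mulrBr mulr1 opprB addrC subrK.
by rewrite gtrBl.
Qed.

End Network.

Theorem mainTheorem4 (R : realType) (n : nat) (E : rel 'I_n)
  (w : 'I_n -> 'I_n -> R) (r alpha : 'I_n -> R) :
  contractor_network E w r alpha ->
  exists m : 'cV[R]_n,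
    (forall i : 'I_n, (fun t => mean E w r alpha t i) @ \oo --> m i ord0) /\
    (forall i : 'I_n,
        m i ord0 = (1 - alpha i) * r i + alpha i * \sum_(j | E j i) w i j * m j ord0) /\
    m = (1%:M - Amx alpha) *m rvec r + Amx alpha *m Wmx w *m m /\
    (1%:M - Amx alpha *m Wmx w) \in unitmx /\
    (forall x : 'cV[R]_n,
        x = (1%:M - Amx alpha) *m rvec r + Amx alpha *m Wmx w *m x -> x = m) /\
    m = invmx (1%:M - Amx alpha *m Wmx w) *m ((1%:M - Amx alpha) *m rvec r).
Proof.
move=> net; have w_off_edge := network_w_off_edge net.
have B_unit := unitmx_1B (AW_ge0 net) (AW_rowsum2_lt1 net).
set B := Amx alpha *m Wmx w in B_unit *; set c := (1%:M - Amx alpha) *m rvec r.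
set m := invmx (1%:M - B) *m c.
have m_fix : m = c + B *m m by apply/(affine_fixpointE c m B_unit).
have mean_cvg i : (fun t => mean E w r alpha t i) @ \oo --> m i ord0.
  apply/subr_cvg0.
  have -> : (fun t => mean E w r alpha t i - m i ord0) =
            (fun t => (iter t (mulmx B) (mean_vec E w r alpha 0 - m)) i ord0).
    by apply/funext => t; rewrite -mean_vec_sub_fixpoint // !mxE.
  exact: (iter_mulmx_cvg0 (AW_ge0 net) (AW_rowsum_le1 net) (AW_rowsum2_lt1 net) _ i).
have m_entry i :
    m i ord0 = (1 - alpha i) * r i + alpha i * \sum_(j | E j i) w i j * m j ord0.
  by rewrite {1}m_fix mxE leak_entry (AWmx_entry E).
have m_unique x : x = c + B *m x -> x = m by move/(affine_fixpointE c x B_unit).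
by exists m; do !split.
Qed.
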